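(* Let $\gamma\ge1$ and consider the SIEMS3 coefficients $(a_0,a_1,a_2)=(\gamma^2+\gamma-\tfrac16,\ \tfrac56-2\gamma^2,\ \gamma^2-\gamma+\tfrac13)$, $(b_0,\dots,b_3)=(\gamma^2,\ 2\gamma-2\gamma^2,\ \gamma^2-2\gamma+1,\ 0)$, $(c_0,c_1,c_2)=(\gamma^2+2\gamma,\ -2\gamma^2-2\gamma+1,\ \gamma^2)$. Then $$\sigma_{\mathrm{F}}=1,\quad\sigma_{\mathrm{E}}=\frac{3(4\gamma^2+4\gamma-1)}{12\gamma^2-2},\quad\lambda_{\mathrm{I}}=\frac{3(2\gamma-1)^2}{12\gamma^2-2},\quad\text{so that}\quad\mathfrak{I}_{\mathrm{IE}}=\frac{(2\gamma-1)^2}{4\gamma^2+4\gamma-1}.$$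
   Context: For coefficient vectors $(a_j)_{j=0}^{\mathrm{k}-1}$, $(b_j)_{j=0}^{\mathrm{k}}$, $(c_j)_{j=0}^{\mathrm{k}-1}$ define $a(\theta)=\sum_j a_je^{\imath j\theta}$, $b(\theta)=\sum_j b_je^{\imath j\theta}$, $c(\theta)=\sum_jc_je^{\imath j\theta}$ and $\sigma_{\mathrm{F}}=\max_{\theta\in[0,2\pi)}|1/a(\theta)|$, $\sigma_{\mathrm{E}}=\max_{\theta\in[0,2\pi)}|c(\theta)/a(\theta)|$, $\lambda_{\mathrm{I}}=\min_{\theta\in[0,2\pi)}\Re[b(\theta)/a(\theta)]$, $\mathfrak{I}_{\mathrm{IE}}=\lambda_{\mathrm{I}}/\sigma_{\mathrm{E}}$. Here $\mathrm{k}=3$. *)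

From Stdlib Require Import Reals Lra List.
Import ListNotations.
From Coquelicot Require Import Coquelicot.
Open Scope R_scope.

Definition expi (t : R) : C := (cos t, sin t).

Fixpoint trigpoly_from (j0 : nat) (l : list R) (theta : R) : C :=
  match l with
  | nil => RtoC 0
  | x :: l' => Cplus (Cmult (RtoC x) (expi (INR j0 * theta)))
                     (trigpoly_from (S j0) l' theta)
  end.

Definition trigpoly (l : list R) (theta : R) : C := trigpoly_from 0 l theta.

Definition IsMaxOn02pi (f : R -> R) (M : R) : Prop :=
  (exists t, 0 <= t < 2 * PI /\ f t = M) /\
  (forall t, 0 <= t < 2 * PI -> f t <= M).

Definition IsMinOn02pi (f : R -> R) (m : R) : Prop :=
  (exists t, 0 <= t < 2 * PI /\ f t = m) /\
  (forall t, 0 <= t < 2 * PI -> m <= f t).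

Definition sigF_fun (a : list R) (theta : R) : R := Cmod (Cinv (trigpoly a theta)).
Definition sigE_fun (a c : list R) (theta : R) : R :=
  Cmod (Cdiv (trigpoly c theta) (trigpoly a theta)).
Definition lamI_fun (a b : list R) (theta : R) : R :=
  Re (Cdiv (trigpoly b theta) (trigpoly a theta)).

Definition siems3_a (g : R) : list R :=
  [g^2 + g - 1/6; 5/6 - 2 * g^2; g^2 - g + 1/3].
Definition siems3_b (g : R) : list R :=
  [g^2; 2 * g - 2 * g^2; g^2 - 2 * g + 1; 0].
Definition siems3_c (g : R) : list R :=
  [g^2 + 2 * g; - 2 * g^2 - 2 * g + 1; g^2].

From Stdlib Require Import Reals Lra List.
From Coquelicot Require Import Coquelicot.
Import ListNotations.
Open Scope R_scope.

(* On the unit circle the real part of x(θ) conj y(θ), for real coefficient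
   vectors of degree at most 2, is a quadratic polynomial in c = cos θ; in
   particular so is |a(θ)|^2. Hence σ_F, σ_E and λ_I are extrema over
   c ∈ [-1, 1] of square roots or ratios of such quadratics. For γ >= 1, after
   clearing the positive denominators, the difference between each ratio and
   its claimed extremal value factors as (1 - c) or (1 + c) times a linear function of c whose coefficients are
   polynomials in γ - 1 with nonnegative coefficients, so the extremum is
   attained at c = 1 (for σ_F) or at c = -1 (for σ_E and λ_I). *)

(* Re (x(θ) conj y(θ)) as a polynomial in c = cos θ; only the coefficients of
   degree at most 2 are read. *)
Definition corr2 (x y : list R) (c : R) : R :=
  let x0 := nth 0 x 0 in let x1 := nth 1 x 0 in let x2 := nth 2 x 0 in
  let y0 := nth 0 y 0 in let y1 := nth 1 y 0 in let y2 := nth 2 y 0 in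
  (x0 * y0 + x1 * y1 + x2 * y2) + (x0 * y1 + x1 * y0 + x1 * y2 + x2 * y1) * c
  + (x0 * y2 + x2 * y0) * (2 * c ^ 2 - 1).

Lemma trigpoly_from_app0 (j : nat) (l : list R) (t : R) :
  trigpoly_from j (l ++ [0]) t = trigpoly_from j l t.
Proof.
  revert j; induction l as [|x l IH]; intro j; simpl.
  - rewrite Cmult_0_l, Cplus_0_l; reflexivity.
  - rewrite IH; reflexivity.
Qed.

Lemma trigpoly3 (x0 x1 x2 t : R) :
  trigpoly [x0; x1; x2] t =
  (x0 + x1 * cos t + x2 * cos (2 * t), x1 * sin t + x2 * sin (2 * t)).
Proof.
  unfold trigpoly, trigpoly_from, expi.
  replace (INR 0 * t) with 0 by (simpl; ring).
  replace (INR 1 * t) with t by (simpl; ring).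
  replace (INR 2 * t) with (2 * t) by (simpl; ring).
  rewrite cos_0, sin_0.
  apply injective_projections; simpl; ring.
Qed.

Lemma Re_trigpoly3_mul_conj (x0 x1 x2 y0 y1 y2 t : R) :
  Re (trigpoly [x0; x1; x2] t * Cconj (trigpoly [y0; y1; y2] t)) =
  corr2 [x0; x1; x2] [y0; y1; y2] (cos t).
Proof.
  assert (unit_circle : forall u, cos u ^ 2 + sin u ^ 2 = 1).
  { intro u; rewrite <- (sin2_cos2 u); unfold Rsqr; ring. }
  assert (cos_shift : cos (2 * t) * cos t + sin (2 * t) * sin t = cos t).
  { rewrite <- cos_minus; f_equal; ring. }
  rewrite !trigpoly3; unfold corr2; cbn [nth].
  replace (2 * cos t ^ 2 - 1) with (cos (2 * t)) by (rewrite cos_2a_cos; ring).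
  transitivity (x0 * y0 + (x0 * y1 + x1 * y0) * cos t + (x0 * y2 + x2 * y0) * cos (2 * t)
    + x1 * y1 * (cos t ^ 2 + sin t ^ 2)
    + (x1 * y2 + x2 * y1) * (cos (2 * t) * cos t + sin (2 * t) * sin t)
    + x2 * y2 * (cos (2 * t) ^ 2 + sin (2 * t) ^ 2)).
  - unfold Re, Cmult, Cconj; simpl; ring.
  - rewrite cos_shift, !unit_circle; ring.
Qed.

Lemma Cmod_trigpoly3 (x0 x1 x2 t : R) :
  Cmod (trigpoly [x0; x1; x2] t) = sqrt (corr2 [x0; x1; x2] [x0; x1; x2] (cos t)).
Proof.
  rewrite <- Re_trigpoly3_mul_conj, <- Cmod2_conj; cbn [Re RtoC fst].
  rewrite sqrt_pow2 by apply Cmod_ge_0; reflexivity.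
Qed.

Lemma Re_Cdiv (p q : C) : q <> 0 -> Re (p / q) = Re (p * Cconj q) / Cmod q ^ 2.
Proof.
  intro Hq.
  assert (Hpos : 0 < Cmod q ^ 2) by (apply pow_lt, Cmod_gt_0, Hq).
  destruct p as [p1 p2], q as [q1 q2].
  unfold Cmod in *; rewrite pow2_sqrt in * by (simpl; nra).
  simpl in Hpos; unfold Cdiv, Cinv, Cmult, Cconj, Re; simpl.
  field; lra.
Qed.

Section DegreeTwo.

Variables a0 a1 a2 t : R.
Hypothesis a_pos : 0 < corr2 [a0; a1; a2] [a0; a1; a2] (cos t).

Lemma trigpoly3_neq0 : trigpoly [a0; a1; a2] t <> 0.
Proof.
  intro E; apply sqrt_lt_R0 in a_pos.
  rewrite <- Cmod_trigpoly3, E, Cmod_0 in a_pos; lra.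
Qed.

Lemma sigF_fun3 : sigF_fun [a0; a1; a2] t = sqrt (/ corr2 [a0; a1; a2] [a0; a1; a2] (cos t)).
Proof.
  unfold sigF_fun.
  rewrite Cmod_inv by exact trigpoly3_neq0.
  rewrite Cmod_trigpoly3, sqrt_inv; reflexivity.
Qed.

Lemma sigE_fun3 (c0 c1 c2 : R) :
  sigE_fun [a0; a1; a2] [c0; c1; c2] t =
  sqrt (corr2 [c0; c1; c2] [c0; c1; c2] (cos t) / corr2 [a0; a1; a2] [a0; a1; a2] (cos t)).
Proof.
  unfold sigE_fun.
  rewrite Cmod_div by exact trigpoly3_neq0.
  rewrite !Cmod_trigpoly3, sqrt_div_alt by exact a_pos; reflexivity.
Qed.

Lemma lamI_fun3 (b0 b1 b2 : R) :
  lamI_fun [a0; a1; a2] [b0; b1; b2] t =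
  corr2 [b0; b1; b2] [a0; a1; a2] (cos t) / corr2 [a0; a1; a2] [a0; a1; a2] (cos t).
Proof.
  unfold lamI_fun.
  rewrite Re_Cdiv by exact trigpoly3_neq0.
  rewrite Re_trigpoly3_mul_conj, Cmod_trigpoly3, pow2_sqrt by lra; reflexivity.
Qed.

End DegreeTwo.

Lemma IsMaxOn02pi_of_cos (f h : R -> R) (M : R) :
  (forall t, f t = h (cos t)) ->
  (exists c, -1 <= c <= 1 /\ h c = M) ->
  (forall c, -1 <= c <= 1 -> h c <= M) ->
  IsMaxOn02pi f M.
Proof.
  intros Hf [c [Hc HcM]] Hle; split.
  - exists (acos c); split.
    + pose proof (acos_bound c); pose proof PI_RGT_0; lra.
    + rewrite Hf, cos_acos; assumption.
  - intros t _; rewrite Hf; apply Hle, COS_bound.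
Qed.

Lemma IsMinOn02pi_of_cos (f h : R -> R) (m : R) :
  (forall t, f t = h (cos t)) ->
  (exists c, -1 <= c <= 1 /\ h c = m) ->
  (forall c, -1 <= c <= 1 -> m <= h c) ->
  IsMinOn02pi f m.
Proof.
  intros Hf [c [Hc Hcm]] Hge; split.
  - exists (acos c); split.
    + pose proof (acos_bound c); pose proof PI_RGT_0; lra.
    + rewrite Hf, cos_acos; assumption.
  - intros t _; rewrite Hf; apply Hge, COS_bound.
Qed.

Lemma IsMaxOn02pi_sqrt_of_cos (f r : R -> R) (M : R) :
  0 <= M ->
  (forall t, f t = sqrt (r (cos t))) ->
  (exists c, -1 <= c <= 1 /\ r c = M ^ 2) ->
  (forall c, -1 <= c <= 1 -> r c <= M ^ 2) ->
  IsMaxOn02pi f M.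
Proof.
  intros HM Hf [c [Hc HcM]] Hle.
  apply (IsMaxOn02pi_of_cos f (fun c => sqrt (r c))); [exact Hf | |].
  - exists c; split; [exact Hc|]; rewrite HcM; apply sqrt_pow2, HM.
  - intros c' Hc'; rewrite <- (sqrt_pow2 M HM); apply sqrt_le_1_alt, Hle, Hc'.
Qed.

Ltac nonneg :=
  first [ lra
        | apply pow_le; lra
        | apply Rplus_le_le_0_compat; nonneg
        | apply Rmult_le_pos; nonneg ].

Section Siems3.

Variable g : R.
Hypothesis g_ge1 : 1 <= g.

Local Notation A := (corr2 (siems3_a g) (siems3_a g)).
Local Notation B := (corr2 (siems3_b g) (siems3_a g)).
Local Notation Cc := (corr2 (siems3_c g) (siems3_c g)).
Local Notation D := (12 * g ^ 2 - 2).

Lemma siems3_A_ge1 (c : R) : -1 <= c <= 1 -> 1 <= A c.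
Proof.
  intro Hc; enough (0 <= A c - 1) by lra.
  replace (A c - 1) with ((1 - c) * ((1/6 + 4 * (g-1) + 4 * (g-1)^2)
    + (22/9 + 34/3 * (g-1) + 62/3 * (g-1)^2 + 16 * (g-1)^3 + 4 * (g-1)^4) * (1 - c)))
    by (unfold corr2, siems3_a; cbn [nth]; field).
  nonneg.
Qed.

Lemma siems3_A_pos (c : R) : -1 <= c <= 1 -> 0 < A c.
Proof. intro Hc; pose proof (siems3_A_ge1 c Hc); lra. Qed.

Lemma siems3_sigE_sqr_le (c : R) : -1 <= c <= 1 ->
  Cc c / A c <= (3 * (4 * g^2 + 4 * g - 1) / D) ^ 2.
Proof.
  intro Hc; pose proof (siems3_A_pos c Hc).
  assert (HD : 0 < D) by nra.
  apply Rle_div_l; [lra|].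
  apply Rmult_le_reg_l with (D ^ 2); [nra|].
  replace (D ^ 2 * ((3 * (4 * g^2 + 4 * g - 1) / D) ^ 2 * A c))
    with ((3 * (4 * g^2 + 4 * g - 1)) ^ 2 * A c) by (field; lra).
  enough (0 <= (3 * (4 * g^2 + 4 * g - 1)) ^ 2 * A c - D ^ 2 * Cc c) by lra.
  replace ((3 * (4 * g^2 + 4 * g - 1)) ^ 2 * A c - D ^ 2 * Cc c)
    with ((1 + c) * ((341/2 + 516 * (g-1) + 492 * (g-1)^2 + 144 * (g-1)^3)
      + (122 + 1066 * (g-1) + 3142 * (g-1)^2 + 4176 * (g-1)^3 + 2556 * (g-1)^4
         + 576 * (g-1)^5) * (1 - c)))
    by (unfold corr2, siems3_a, siems3_c; cbn [nth]; field).
  nonneg.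
Qed.

Lemma siems3_lamI_ge (c : R) : -1 <= c <= 1 ->
  3 * (2 * g - 1)^2 / D <= B c / A c.
Proof.
  intro Hc; pose proof (siems3_A_pos c Hc).
  assert (HD : 0 < D) by nra.
  apply Rmult_le_reg_r with (D * A c); [nra|].
  replace (3 * (2 * g - 1)^2 / D * (D * A c)) with (3 * (2 * g - 1)^2 * A c) by (field; lra).
  replace (B c / A c * (D * A c)) with (D * B c) by (field; lra).
  enough (0 <= D * B c - 3 * (2 * g - 1)^2 * A c) by lra.
  replace (D * B c - 3 * (2 * g - 1)^2 * A c)
    with ((1 + c) * ((7/2 + 6 * (g-1))
      + (2/3 + 14 * (g-1) + 36 * (g-1)^2 + 24 * (g-1)^3) * (1 - c)))
    by (unfold corr2, siems3_a, siems3_b; cbn [nth]; field).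
  nonneg.
Qed.

Lemma siems3_A_at_1 : A 1 = 1.
Proof. unfold corr2, siems3_a; cbn [nth]; field. Qed.

Lemma siems3_A_at_m1 : A (-1) = (D / 3) ^ 2.
Proof. unfold corr2, siems3_a; cbn [nth]; field. Qed.

Lemma siems3_sigE_sqr_at_m1 : Cc (-1) / A (-1) = (3 * (4 * g^2 + 4 * g - 1) / D) ^ 2.
Proof.
  assert (HD : 0 < D) by nra.
  rewrite siems3_A_at_m1; unfold corr2, siems3_c; cbn [nth]; field; lra.
Qed.

Lemma siems3_lamI_at_m1 : B (-1) / A (-1) = 3 * (2 * g - 1)^2 / D.
Proof.
  assert (HD : 0 < D) by nra.
  rewrite siems3_A_at_m1; unfold corr2, siems3_a, siems3_b; cbn [nth]; field; lra.
Qed.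

Lemma siems3_lamI_fun (t : R) : lamI_fun (siems3_a g) (siems3_b g) t = B (cos t) / A (cos t).
Proof.
  unfold lamI_fun, trigpoly.
  change (siems3_b g) with ([g^2; 2 * g - 2 * g^2; g^2 - 2 * g + 1] ++ [0]).
  rewrite trigpoly_from_app0.
  exact (lamI_fun3 _ _ _ t (siems3_A_pos _ (COS_bound t)) _ _ _).
Qed.

End Siems3.

Theorem mainTheorem10 (g : R) (hg : 1 <= g) :
  let sigmaE := 3 * (4 * g^2 + 4 * g - 1) / (12 * g^2 - 2) in
  let lambdaI := 3 * (2 * g - 1)^2 / (12 * g^2 - 2) in
  IsMaxOn02pi (sigF_fun (siems3_a g)) 1 /\
  IsMaxOn02pi (sigE_fun (siems3_a g) (siems3_c g)) sigmaE /\
  IsMinOn02pi (lamI_fun (siems3_a g) (siems3_b g)) lambdaI /\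
  lambdaI / sigmaE = (2 * g - 1)^2 / (4 * g^2 + 4 * g - 1).
Proof.
  intros sigmaE lambdaI.
  assert (HD : 0 < 12 * g^2 - 2) by nra.
  pose proof (fun t => siems3_A_pos g hg _ (COS_bound t)) as A_pos.
  split; [|split; [|split]].
  - apply (IsMaxOn02pi_sqrt_of_cos _ (fun c => / corr2 (siems3_a g) (siems3_a g) c));
      [lra | | |].
    + intro t; exact (sigF_fun3 _ _ _ t (A_pos t)).
    + exists 1; split; [lra|]; rewrite siems3_A_at_1; field.
    + intros c Hc; pose proof (siems3_A_ge1 g hg c Hc).
      replace (1 ^ 2) with (/ 1) by field; apply Rinv_le_contravar; lra.
  - apply (IsMaxOn02pi_sqrt_of_cos _
      (fun c => corr2 (siems3_c g) (siems3_c g) c / corr2 (siems3_a g) (siems3_a g) c)).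
    + apply Rdiv_le_0_compat; nra.
    + intro t; exact (sigE_fun3 _ _ _ t (A_pos t) _ _ _).
    + exists (-1); split; [lra | exact (siems3_sigE_sqr_at_m1 g hg)].
    + exact (siems3_sigE_sqr_le g hg).
  - apply (IsMinOn02pi_of_cos _
      (fun c => corr2 (siems3_b g) (siems3_a g) c / corr2 (siems3_a g) (siems3_a g) c)).
    + exact (siems3_lamI_fun g hg).
    + exists (-1); split; [lra | exact (siems3_lamI_at_m1 g hg)].
    + exact (siems3_lamI_ge g hg).
  - unfold lambdaI, sigmaE; field; nra.
Qed.
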